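(* Fix $m,n\in\mathbb N$ and convex bodies $K_0,\dots,K_m\subseteq\mathbb R^n$ containing the origin in their interiors; $\mathscr K=(K_0,\dots,K_m)$. Define \[D^{m,\circ}_2(\mathscr K)=\Big\{(x_1,\dots,x_m)\in\mathbb R^{nm}:\ h_{K_0}\Big(\sum_{i=1}^m x_i\Big)^2+\sum_{i=1}^m h_{-K_i}(x_i)^2\le1\Big\}.\] Then $(m+1)^{-1/2}D^{m,\circ}_2(\mathscr K)\subseteq D^{m,\circ}(\mathscr K)$, and equality holds if and only if $m=1$ and $K_0=-K_1$.
   Context: $h_L(u)=\sup_{y\in L}\langle u,y\rangle$ is the support function. $D^m(\mathscr K)=\{(x_1,\dots,x_m)\in(\mathbb R^n)^m: K_0\cap\bigcap_{i=1}^m(K_i+x_i)\neq\emptyset\}$ and $D^{m,\circ}(\mathscr K)$ is its polar $\{y:\langle y,x\rangle\le1\ \forall x\in D^m(\mathscr K)\}$. *)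

From HB Require Import structures.
From mathcomp Require Import all_boot all_order all_algebra.
From mathcomp Require Import all_classical all_reals all_analysis.
Set Implicit Arguments. Unset Strict Implicit. Unset Printing Implicit Defensive.
Import Order.TTheory GRing.Theory Num.Theory.
Import numFieldNormedType.Exports.
Local Open Scope classical_set_scope.
Local Open Scope ring_scope.

Definition dotv {R : realType} {n : nat} (u v : 'rV[R]_n) : R :=
  \sum_(j < n) u ord0 j * v ord0 j.

(* inner product on (R^n)^m, points are m-tuples of vectors *)
Definition dotvm {R : realType} {m n : nat} (x y : 'I_m -> 'rV[R]_n) : R :=
  \sum_(i < m) dotv (x i) (y i).

Definition convex_body0 {R : realType} {n : nat} (K : set 'rV[R]_n) : Prop :=
  [/\ (forall x y : 'rV[R]_n, K x -> K y -> forall t : R, 0 <= t <= 1 ->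
         K (t *: x + (1 - t) *: y)),
      compact K &
      interior K (0 : 'rV[R]_n)].

Definition supp_fun {R : realType} {n : nat} (L : set 'rV[R]_n) (u : 'rV[R]_n) : R :=
  sup [set dotv u y | y in L].

Definition setneg {R : realType} {n : nat} (L : set 'rV[R]_n) : set 'rV[R]_n :=
  [set - y | y in L].

Definition settr {R : realType} {n : nat} (L : set 'rV[R]_n) (x : 'rV[R]_n) : set 'rV[R]_n :=
  [set y + x | y in L].

Definition Dm {R : realType} {m n : nat} (K0 : set 'rV[R]_n) (Ks : 'I_m -> set 'rV[R]_n)
  : set ('I_m -> 'rV[R]_n) :=
  [set x | exists z : 'rV[R]_n, K0 z /\ forall i : 'I_m, settr (Ks i) (x i) z].

Definition polar_m {R : realType} {m n : nat} (D : set ('I_m -> 'rV[R]_n))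
  : set ('I_m -> 'rV[R]_n) :=
  [set y | forall x, D x -> dotvm y x <= 1].

Definition Dm_polar {R : realType} {m n : nat} (K0 : set 'rV[R]_n) (Ks : 'I_m -> set 'rV[R]_n) :=
  polar_m (Dm K0 Ks).

Definition Dm_polar2 {R : realType} {m n : nat} (K0 : set 'rV[R]_n) (Ks : 'I_m -> set 'rV[R]_n)
  : set ('I_m -> 'rV[R]_n) :=
  [set x | supp_fun K0 (\sum_(i < m) x i) ^+ 2
           + \sum_(i < m) supp_fun (setneg (Ks i)) (x i) ^+ 2 <= 1].

Definition scale_m {R : realType} {m n : nat} (c : R) (D : set ('I_m -> 'rV[R]_n))
  : set ('I_m -> 'rV[R]_n) :=
  [set (fun i => c *: x i) | x in D].

From HB Require Import structures.
From mathcomp Require Import all_boot all_order all_algebra.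
From mathcomp Require Import all_classical all_reals all_analysis.
From mathcomp Require Import ring lra.
Set Implicit Arguments. Unset Strict Implicit. Unset Printing Implicit Defensive.
Import Order.TTheory GRing.Theory Num.Theory.
Import numFieldNormedType.Exports.
Local Open Scope classical_set_scope.
Local Open Scope ring_scope.

(* The supremum of <y, x> over D^m(K) is attained at x_i = z - k_i, where z maximises
   <\sum_i y_i, .> on K_0 and k_i minimises <y_i, .> on K_i.  Hence D^{m,o}(K) and
   D^{m,o}_2(K) are the unit balls of the l1 norm and of the l2 norm of the vector
   (h_{K_0}(\sum_i y_i), h_{-K_1}(y_1), ..., h_{-K_m}(y_m)), and the inclusion is
   Cauchy-Schwarz for m + 1 numbers.  Equality of the two sets means that
   Cauchy-Schwarz is tight on all these vectors.  For y supported at one index i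
   and y_i = v != 0 this reads (m + 1)(a^2 + b^2) <= (a + b)^2 with a = h_{K_0}(v) and
   b = h_{-K_i}(v) > 0, which forces m = 1 and a = b; and a convex body is determined
   by its support function. *)

Section SumOfSquares.
Variable R : realFieldType.

Lemma sqr_sum_le (N : nat) (a : 'I_N -> R) :
  (\sum_(i < N) a i) ^+ 2 <= N%:R * \sum_(i < N) a i ^+ 2.
Proof.
case: N a => [|N] a; first by rewrite !big_ord0 expr0n mul0r.
set S := \sum_i a i; set Q := \sum_i a i ^+ 2.
have : 0 <= \sum_(i < N.+1) (S - N.+1%:R * a i) ^+ 2.
  by apply: sumr_ge0 => i _; exact: sqr_ge0.
have -> : \sum_(i < N.+1) (S - N.+1%:R * a i) ^+ 2
          = N.+1%:R * (N.+1%:R * Q - S ^+ 2).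
  rewrite (eq_bigr (fun i => S ^+ 2 - 2 * S * N.+1%:R * a i
                             + N.+1%:R ^+ 2 * a i ^+ 2)); last by move=> i _; ring.
  rewrite !big_split /= sumrN sumr_const card_ord -!mulr_sumr -/S -/Q -mulr_natr.
  ring.
by rewrite pmulr_rge0 ?ltr0Sn // subr_ge0.
Qed.

Lemma sqr_add_sum_le (N : nat) (b : R) (a : 'I_N -> R) :
  (b + \sum_(i < N) a i) ^+ 2 <= N.+1%:R * (b ^+ 2 + \sum_(i < N) a i ^+ 2).
Proof.
pose c (i : 'I_N.+1) := if unlift ord0 i is Some j then a j else b.
have sumE (F : R -> R) : \sum_(i < N.+1) F (c i) = F b + \sum_(i < N) F (a i).
  rewrite big_ord_recl /c unlift_none; congr (_ + _).
  by apply: eq_bigr => i _; rewrite liftK.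
by have := sqr_sum_le c; rewrite (sumE id) (sumE (fun x => x ^+ 2)).
Qed.

Lemma sqr_add_ge_le1 (m : nat) (a b : R) : b != 0 ->
  m.+1%:R * (a ^+ 2 + b ^+ 2) <= (a + b) ^+ 2 -> (m <= 1)%N.
Proof.
move=> b0 h; rewrite leqNgt; apply/negP => m2.
have : 3 <= m.+1%:R :> R by rewrite (ler_nat _ 3) ltnS.
have : 0 < b ^+ 2 by rewrite exprn_even_gt0.
have := sqr_ge0 a; have := sqr_ge0 (a - b); nra.
Qed.

Lemma sqr_add_ge_eq (a b : R) :
  2 * (a ^+ 2 + b ^+ 2) <= (a + b) ^+ 2 -> a = b.
Proof.
move=> h; apply/eqP; rewrite -subr_eq0 -sqrf_eq0 eq_le sqr_ge0 andbT; nra.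
Qed.

End SumOfSquares.

Definition is_convex {R : realType} {n : nat} (K : set 'rV[R]_n) : Prop :=
  forall x y, K x -> K y -> forall t : R, 0 <= t <= 1 -> K (t *: x + (1 - t) *: y).

Section InnerProduct.
Variables (R : realType) (n : nat).
Implicit Types (u v w y z : 'rV[R]_n).

Lemma dotvC u v : dotv u v = dotv v u.
Proof. by apply: eq_bigr => j _; rewrite mulrC. Qed.

Lemma dotvDl u v y : dotv (u + v) y = dotv u y + dotv v y.
Proof. by rewrite /dotv -big_split; apply: eq_bigr => j _; rewrite mxE mulrDl. Qed.

Lemma dotvZl (c : R) u y : dotv (c *: u) y = c * dotv u y.
Proof. by rewrite /dotv mulr_sumr; apply: eq_bigr => j _; rewrite mxE mulrA. Qed.

Lemma dotvNl u y : dotv (- u) y = - dotv u y.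
Proof. by rewrite -scaleN1r dotvZl mulN1r. Qed.

Lemma dotvBl u v y : dotv (u - v) y = dotv u y - dotv v y.
Proof. by rewrite dotvDl dotvNl. Qed.

Lemma dotv0l y : dotv 0 y = 0.
Proof. by rewrite -(scale0r 0) dotvZl mul0r. Qed.

Lemma dotvDr u v y : dotv y (u + v) = dotv y u + dotv y v.
Proof. by rewrite dotvC dotvDl !(dotvC y). Qed.

Lemma dotvZr (c : R) u y : dotv y (c *: u) = c * dotv y u.
Proof. by rewrite dotvC dotvZl dotvC. Qed.

Lemma dotvNr u y : dotv y (- u) = - dotv y u.
Proof. by rewrite dotvC dotvNl dotvC. Qed.

Lemma dotvBr u v y : dotv y (u - v) = dotv y u - dotv y v.
Proof. by rewrite dotvC dotvBl !(dotvC y). Qed.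

Lemma dotv_suml (m : nat) (x : 'I_m -> 'rV[R]_n) y :
  dotv (\sum_i x i) y = \sum_i dotv (x i) y.
Proof. by apply: (big_morph (dotv^~ y)) => [u v|]; rewrite ?dotvDl ?dotv0l. Qed.

Lemma dotv_ge0 u : 0 <= dotv u u.
Proof. by apply: sumr_ge0 => j _; rewrite -expr2 sqr_ge0. Qed.

Lemma dotv_gt0 u : u != 0 -> 0 < dotv u u.
Proof.
move=> u0; have [j uj] : exists j, u ord0 j != 0.
  apply/existsP; apply: contraNT u0 => /existsPn u0; apply/eqP/rowP => j.
  by rewrite mxE; apply/eqP; move: (u0 j); rewrite negbK.
rewrite /dotv (bigD1 j) //= -expr2 ltr_pwDl ?exprn_even_gt0 //.
by apply: sumr_ge0 => k _; rewrite -expr2 sqr_ge0.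
Qed.

Lemma dotv_expand u w (t : R) :
  dotv (u - t *: w) (u - t *: w) = dotv u u - 2 * t * dotv u w + t ^+ 2 * dotv w w.
Proof. rewrite !(dotvBl, dotvBr, dotvZl, dotvZr) (dotvC w u); ring. Qed.

Lemma continuous_dotv (f g : 'rV[R]_n -> 'rV[R]_n) :
  continuous f -> continuous g -> continuous (fun y => dotv (f y) (g y)).
Proof.
move=> cf cg; apply: continuous_big => [|j _ y]; first exact: add_continuous.
apply: continuousM.
  exact: continuous_comp (cf y) (@coord_continuous _ _ _ ord0 j (f y)).
exact: continuous_comp (cg y) (@coord_continuous _ _ _ ord0 j (g y)).
Qed.

End InnerProduct.

Section SupportFunction.
Variables (R : realType) (n : nat).
Implicit Types (K : set 'rV[R]_n) (u v y z : 'rV[R]_n).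

Lemma supp_fun_attained K u : compact K -> K !=set0 -> exists c,
  [/\ K c, (forall y, K y -> dotv u y <= dotv u c) & supp_fun K u = dotv u c].
Proof.
move=> cK K0.
have cu : continuous (dotv u) := continuous_dotv (@cst_continuous _ _ u) (fun=> cvg_id).
have [c /[!inE] Kc cmax] := EVT_max_rV K0 cK (continuous_subspaceT cu).
have ub y : K y -> dotv u y <= dotv u c by move=> Ky; apply: cmax; rewrite inE.
exists c; split => //; apply/le_anti/andP; split.
  by apply: ge_sup => [|_ [y Ky <-]]; [exists (dotv u c), c | exact: ub].
by apply: ub_le_sup; [exists (dotv u c) => _ [y Ky <-]; exact: ub | exists c].
Qed.

Lemma supp_fun_ub K u {y} : compact K -> K y -> dotv u y <= supp_fun K u.
Proof.
move=> cK Ky; have [c [_ cmax ->]] := supp_fun_attained u cK (ex_intro _ y Ky).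
exact: cmax.
Qed.

Lemma supp_fun_le_ub K u b : compact K -> K !=set0 ->
  (forall y, K y -> dotv u y <= b) -> supp_fun K u <= b.
Proof.
by move=> cK K0 ub; have [c [Kc _ ->]] := supp_fun_attained u cK K0; exact: ub.
Qed.

Lemma supp_funZ K (s : R) u : compact K -> K !=set0 -> 0 <= s ->
  supp_fun K (s *: u) = s * supp_fun K u.
Proof.
move=> cK K0 s0; have [c [Kc cmax ->]] := supp_fun_attained u cK K0.
apply/le_anti/andP; split; last by rewrite -dotvZl; exact: supp_fun_ub.
by apply: supp_fun_le_ub => // y Ky; rewrite dotvZl ler_wpM2l // cmax.
Qed.

Lemma supp_fun0 K : compact K -> K !=set0 -> supp_fun K 0 = 0.
Proof. by move=> cK K0; rewrite -(scale0r 0) supp_funZ // mul0r. Qed.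

Lemma supp_fun_ge0 K u : compact K -> K 0 -> 0 <= supp_fun K u.
Proof. by move=> cK K0; have := supp_fun_ub u cK K0; rewrite dotvC dotv0l. Qed.

Lemma supp_fun_gt0 K u : compact K -> interior K 0 -> u != 0 -> 0 < supp_fun K u.
Proof.
move=> cK K0 u0.
have : \forall e \near (0 : R), K (e *: u).
  have : (fun e : R => e *: u) @ (0 : R) --> (0 : R) *: u.
    by apply: cvgZr_tmp; exact: cvg_id.
  by rewrite scale0r; exact.
move=> /(nbhs_ballP _ _).1[d /= d0 Kd].
have Kdu : K ((d / 2) *: u).
  by apply: Kd; rewrite /ball /= sub0r normrN gtr0_norm ?divr_gt0 //; lra.
apply: lt_le_trans (supp_fun_ub u cK Kdu).
by rewrite dotvZr mulr_gt0 ?divr_gt0 // dotv_gt0.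
Qed.

Lemma supp_fun_setneg K u : supp_fun (setneg K) u = supp_fun K (- u).
Proof.
rewrite /supp_fun; congr sup; apply/seteqP; split => _ [y Ky <-].
  by case: Ky => k Kk <-; exists k => //; rewrite dotvNr dotvNl.
by exists (- y); [exists y | rewrite dotvNr dotvNl].
Qed.

Lemma nearest_point_obtuse K z p : is_convex K -> K p ->
  (forall k, K k -> dotv (z - p) (z - p) <= dotv (z - k) (z - k)) ->
  forall k, K k -> dotv (z - p) (k - p) <= 0.
Proof.
move=> Kcvx Kp pmin k Kk; set u := z - p; set w := k - p.
rewrite leNgt; apply/negP => a0.
set a := dotv u w in a0; have b0 : 0 <= dotv w w := dotv_ge0 w; set b := dotv w w in b0.
(* Moving from p towards k by t would bring the point closer to z. *)
set t := a / (b + a).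
have t0 : 0 < t by rewrite divr_gt0 //; lra.
have tba : t * (b + a) = a by rewrite /t divfK //; apply/lt0r_neq0; lra.
have t1 : t <= 1 by rewrite -(ler_pM2r (_ : 0 < b + a)); lra.
have := pmin _ (Kcvx k p Kk Kp t (ltac:(apply/andP; split; lra))).
have -> : z - (t *: k + (1 - t) *: p) = u - t *: w.
  rewrite /u /w scalerBr scalerBl scale1r opprD opprB opprB !addrA addrAC.
  by rewrite (addrAC z) -!addrA (addrC (t *: p)).
rewrite dotv_expand -/a -/b => ht.
nra.
Qed.

Lemma supp_fun_mem K z : is_convex K -> compact K -> K !=set0 ->
  (forall u, dotv u z <= supp_fun K u) -> K z.
Proof.
move=> Kcvx cK K0 hz; apply: contrapT => Kz.
have cz : continuous (fun y => z - y).
  by move=> y; exact: continuousB (@cst_continuous _ _ z y) cvg_id.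
have cd := continuous_dotv cz cz.
have [p /[!inE] Kp pmin] := EVT_min_rV K0 cK (continuous_subspaceT cd).
have u0 : z - p != 0 by rewrite subr_eq0; apply/eqP => zp; apply: Kz; rewrite zp.
have : supp_fun K (z - p) <= dotv (z - p) p.
  apply: supp_fun_le_ub => // k Kk; rewrite -subr_le0 -dotvBr.
  apply: (nearest_point_obtuse Kcvx Kp) Kk => y Ky; exact: pmin (mem_set Ky).
have := hz (z - p); have := dotv_gt0 u0; rewrite dotvBr; lra.
Qed.

Lemma eq_setneg_supp_fun (A B : set 'rV[R]_n) :
  is_convex A -> compact A -> A !=set0 -> is_convex B -> compact B -> B !=set0 ->
  (forall v, supp_fun A v = supp_fun B (- v)) -> A = setneg B.
Proof.
move=> cvA cA nA cvB cB nB hAB; apply/seteqP; split.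
  move=> z Az; exists (- z); last exact: opprK.
  apply: supp_fun_mem => // u; rewrite dotvNr.
  by have := supp_fun_ub (- u) cA Az; rewrite hAB opprK dotvNl.
move=> _ [k Bk <-]; apply: supp_fun_mem => // u.
by rewrite hAB dotvNr -dotvNl; exact: supp_fun_ub.
Qed.

End SupportFunction.

Section PolarOfDm.
Variables (R : realType) (m n : nat).
Variables (K0 : set 'rV[R]_n) (Ks : 'I_m -> set 'rV[R]_n).
Hypotheses (cK0 : compact K0) (K0_0 : K0 0).
Hypotheses (cKs : forall i, compact (Ks i)) (Ks_0 : forall i, Ks i 0).
Implicit Types (x y : 'I_m -> 'rV[R]_n).
Arguments cKs i : clear implicits.
Arguments Ks_0 i : clear implicits.

Let nK0 : K0 !=set0. Proof. by exists 0. Qed.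
Let nKs i : Ks i !=set0. Proof. by exists 0. Qed.

(* The l1 norm and the squared l2 norm of the vector of support values
   (h_K0 (\sum_i y i), h_{-K_1} (y 1), ..., h_{-K_m} (y m)),
   using h_{-K} u = h_K (- u). *)
Definition supp_l1 y := supp_fun K0 (\sum_i y i) + \sum_i supp_fun (Ks i) (- y i).
Definition supp_l2 y :=
  supp_fun K0 (\sum_i y i) ^+ 2 + \sum_i supp_fun (Ks i) (- y i) ^+ 2.

Lemma Dm_polar2E x : Dm_polar2 K0 Ks x = (supp_l2 x <= 1).
Proof.
rewrite /Dm_polar2 /supp_l2 /=; congr (_ + _ <= _).
by apply: eq_bigr => i _; rewrite supp_fun_setneg.
Qed.

Lemma dotvm_le_supp_l1 x y : Dm K0 Ks x -> dotvm y x <= supp_l1 y.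
Proof.
move=> [z [Kz Kxz]]; rewrite /dotvm /supp_l1.
apply: (@le_trans _ _ (\sum_i (dotv (y i) z + supp_fun (Ks i) (- y i)))).
  apply: ler_sum => i _; case: (Kxz i) => k Kk <-.
  by have := supp_fun_ub (- y i) (cKs i) Kk; rewrite dotvNl dotvDr; lra.
by rewrite big_split /= -dotv_suml lerD2r; exact: supp_fun_ub.
Qed.

Lemma supp_l1_attained y : exists2 x, Dm K0 Ks x & dotvm y x = supp_l1 y.
Proof.
have [z [Kz _ hz]] := supp_fun_attained (\sum_i y i) cK0 nK0.
have /choice[k hk] : forall i, exists k,
    Ks i k /\ supp_fun (Ks i) (- y i) = dotv (- y i) k.
  move=> i; have [k [Kk _ ->]] := supp_fun_attained (- y i) (cKs i) (nKs i).
  by exists k.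
exists (fun i => z - k i).
  by exists z; split => // i; exists (k i); [case: (hk i) | rewrite addrC subrK].
rewrite /dotvm /supp_l1 hz dotv_suml -big_split /=; apply: eq_bigr => i _.
by case: (hk i) => _ ->; rewrite dotvBr dotvNl.
Qed.

Lemma Dm_polarE y : Dm_polar K0 Ks y <-> supp_l1 y <= 1.
Proof.
split => [hy | hy x Dx]; last exact: le_trans (dotvm_le_supp_l1 y Dx) hy.
by have [x Dx <-] := supp_l1_attained y; exact: hy.
Qed.

Lemma supp_l1_ge0 y : 0 <= supp_l1 y.
Proof.
by rewrite addr_ge0 ?supp_fun_ge0 ?sumr_ge0 // => i _; rewrite supp_fun_ge0.
Qed.

Lemma supp_l2_eq0 y : supp_l1 y = 0 -> supp_l2 y = 0.
Proof.
have hi i : 0 <= supp_fun (Ks i) (- y i) by rewrite supp_fun_ge0.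
move/eqP; rewrite paddr_eq0 ?supp_fun_ge0 ?sumr_ge0 //.
move=> /andP[/eqP h0 /eqP/psumr_eq0P hs]; rewrite /supp_l2 h0 big1 ?addr0 ?expr0n //.
by move=> i _; rewrite hs ?expr0n.
Qed.

Lemma supp_l1Z (s : R) y : 0 <= s -> supp_l1 (fun i => s *: y i) = s * supp_l1 y.
Proof.
move=> s0; rewrite /supp_l1 -scaler_sumr supp_funZ // mulrDr mulr_sumr.
by congr (_ + _); apply: eq_bigr => i _; rewrite -scalerN supp_funZ.
Qed.

Lemma supp_l2Z (s : R) y : 0 <= s ->
  supp_l2 (fun i => s *: y i) = s ^+ 2 * supp_l2 y.
Proof.
move=> s0; rewrite /supp_l2 -scaler_sumr supp_funZ // mulrDr mulr_sumr exprMn.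
by congr (_ + _); apply: eq_bigr => i _; rewrite -scalerN supp_funZ ?exprMn.
Qed.

Lemma sqr_supp_l1_le y : supp_l1 y ^+ 2 <= m.+1%:R * supp_l2 y.
Proof. exact: sqr_add_sum_le. Qed.

Local Notation c := (Num.sqrt (m.+1%:R : R))^-1.

Let c_gt0 : 0 < c.
Proof. by rewrite invr_gt0 sqrtr_gt0 ltr0Sn. Qed.

Let sqr_invc : c^-1 ^+ 2 = m.+1%:R.
Proof. by rewrite invrK sqr_sqrtr ?ler0n. Qed.

Lemma scaled_Dm_polar2_sub : scale_m c (Dm_polar2 K0 Ks) `<=` Dm_polar K0 Ks.
Proof.
move=> _ [x x1 <-]; apply/Dm_polarE; move: x1; rewrite Dm_polar2E => x1.
have cN : c ^+ 2 * m.+1%:R = 1.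
  by rewrite -[X in _ * X]sqr_invc -exprMn mulfV ?expr1n ?gt_eqF.
rewrite supp_l1Z // -(expr_le1 (n := 2)) ?mulr_ge0 ?supp_l1_ge0 //.
rewrite exprMn; have := sqr_supp_l1_le x; have := exprn_gt0 2 c_gt0; nra.
Qed.

Lemma supp_l2_le_of_Dm_polar_eq : scale_m c (Dm_polar2 K0 Ks) = Dm_polar K0 Ks ->
  forall y, m.+1%:R * supp_l2 y <= supp_l1 y ^+ 2.
Proof.
move=> E y; have [l0|l0] := eqVneq (supp_l1 y) 0.
  by rewrite l0 supp_l2_eq0 // mulr0 expr0n.
pose t := (supp_l1 y)^-1.
have t0 : 0 < t by rewrite invr_gt0 lt_neqAle eq_sym l0 supp_l1_ge0.
have : Dm_polar K0 Ks (fun i => t *: y i).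
  by apply/Dm_polarE; rewrite supp_l1Z ?mulVf // ltW.
rewrite -E => -[x x1 cxy].
have xE : x = (fun i => (c^-1 * t) *: y i).
  apply: funext => i; have /= cxyi := congr1 (fun f => f i) cxy.
  by rewrite -scalerA -cxyi scalerA mulVf ?scale1r ?gt_eqF.
move: x1; rewrite xE Dm_polar2E supp_l2Z ?mulr_ge0 ?invr_ge0 ?supp_l1_ge0 //.
rewrite exprMn sqr_invc.
have -> : m.+1%:R * supp_l2 y = supp_l1 y ^+ 2 * (m.+1%:R * t ^+ 2 * supp_l2 y).
  by rewrite /t; field.
by move=> x1; rewrite ler_piMr ?sqr_ge0.
Qed.

Lemma Dm_polar_sub_of_supp_l2_le :
  (forall y, m.+1%:R * supp_l2 y <= supp_l1 y ^+ 2) ->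
  Dm_polar K0 Ks `<=` scale_m c (Dm_polar2 K0 Ks).
Proof.
move=> hl y /Dm_polarE y1.
exists (fun i => c^-1 *: y i); last first.
  by apply: funext => i; rewrite scalerA mulfV ?scale1r ?gt_eqF.
rewrite Dm_polar2E supp_l2Z ?invr_ge0 // sqr_invc.
by have := hl y; have := supp_l1_ge0 y; nra.
Qed.

Lemma Dm_polar_eqP : scale_m c (Dm_polar2 K0 Ks) = Dm_polar K0 Ks <->
  forall y, m.+1%:R * supp_l2 y <= supp_l1 y ^+ 2.
Proof.
split=> [|hl]; first exact: supp_l2_le_of_Dm_polar_eq.
apply/seteqP; split; [exact: scaled_Dm_polar2_sub | exact: Dm_polar_sub_of_supp_l2_le].
Qed.

Lemma supp_fun_pair_sqr_le : (forall y, m.+1%:R * supp_l2 y <= supp_l1 y ^+ 2) ->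
  forall i v, m.+1%:R * (supp_fun K0 v ^+ 2 + supp_fun (Ks i) (- v) ^+ 2)
              <= (supp_fun K0 v + supp_fun (Ks i) (- v)) ^+ 2.
Proof.
move=> hl i v; pose y j := if j == i then v else 0.
have sumy (V : nmodType) (F : 'I_m -> 'rV[R]_n -> V) :
    (forall j, F j 0 = 0) -> \sum_j F j (y j) = F i v.
  by move=> F0; rewrite (bigD1 i) //= /y eqxx big1 ?addr0 // => j /negbTE ->.
have h0 j : supp_fun (Ks j) (- 0) = 0 by rewrite oppr0 supp_fun0.
have := hl y; rewrite /supp_l1 /supp_l2 (sumy _ (fun=> id)) //.
rewrite (sumy _ (fun j u => supp_fun (Ks j) (- u))); last exact: h0.
by rewrite (sumy _ (fun j u => supp_fun (Ks j) (- u) ^+ 2)) // => j; rewrite h0 expr0n.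
Qed.

End PolarOfDm.

Theorem proposition5p8 (R : realType) (m n : nat)
  (K0 : set 'rV[R]_n) (Ks : 'I_m -> set 'rV[R]_n) :
  (1 <= m)%N -> (1 <= n)%N ->
  convex_body0 K0 -> (forall i, convex_body0 (Ks i)) ->
  scale_m (Num.sqrt (m.+1%:R))^-1 (Dm_polar2 K0 Ks) `<=` Dm_polar K0 Ks /\
  (scale_m (Num.sqrt (m.+1%:R))^-1 (Dm_polar2 K0 Ks) = Dm_polar K0 Ks <->
     (m = 1%N /\ forall i : 'I_m, K0 = setneg (Ks i))).
Proof.
move=> m1 n1 [cvx0 cK0 iK0] Kbody.
have K0_0 : K0 0 := interior_subset iK0.
have cKs i : compact (Ks i) by case: (Kbody i).
have Ks_0 i : Ks i 0 by case: (Kbody i) => _ _ /interior_subset.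
split; first exact: scaled_Dm_polar2_sub.
rewrite Dm_polar_eqP //; split => [hl | [m_eq1 K0E] y].
- have hK := supp_fun_pair_sqr_le cKs Ks_0 hl.
  have m_eq1 : m = 1%N.
    pose v : 'rV[R]_n := const_mx 1.
    have v0 : - v != 0.
      rewrite oppr_eq0; apply/eqP => /rowP /(_ (Ordinal n1)).
      by rewrite !mxE; apply/eqP/oner_neq0.
    apply/anti_leq/andP; split => //; apply: sqr_add_ge_le1 (hK (Ordinal m1) v).
    by rewrite gt_eqF // supp_fun_gt0 //; case: (Kbody (Ordinal m1)).
  split=> // i; case: (Kbody i) => cvxi _ _.
  apply: eq_setneg_supp_fun => //; [by exists 0 | by exists 0 | move=> v].
  by apply: sqr_add_ge_eq; have := hK i v; rewrite m_eq1.
- subst m; rewrite /supp_l1 /supp_l2 !big_ord1 -supp_fun_setneg -K0E.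
  have := supp_fun_ge0 (y ord0) cK0 K0_0; nra.
Qed.
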